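(* Let $G$ be a finite group with $d(G) \geq 3$, and assume that $G/\mathrm{Cyc}(G) \cong p^r{:}\langle g\rangle$ where $p$ is prime and $g \in \mathrm{GL}_r(p)$ is a scalar matrix. Then $G$ is $k$-flexible for all $2 \leq k < d(G)$.
   Context: For a finite group $H$, $d(H)$ denotes the minimal size of a generating set of $H$. For an integer $1 \leq k \leq d(G)$, $G$ is called $k$-flexible if for any $x_1,\dots,x_k \in G$ with $d(\langle x_1,\dots,x_k\rangle)=k$ there exist $x_{k+1},\dots,x_{d(G)} \in G$ such that $\langle x_1,\dots,x_{d(G)}\rangle = G$. The cycliciser of $G$ is $\mathrm{Cyc}(G) = \{c \in G \mid \langle c,g\rangle \text{ is cyclic for all } g \in G\}$; it is a normal subgroup of $G$. The notation $p^r{:}\langle g\rangle$ denotes the semidirect product of the elementary abelian group $\mathbb{F}_p^r$ by the cyclic subgroup $\langle g\rangle \leq \mathrm{GL}_r(p)$ acting naturally; a scalar means $g=\lambda I_r$ with $\lambda\in\mathbb{F}_p^\times$. *)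

From HB Require Import structures.
From mathcomp Require Import all_boot all_order all_algebra all_fingroup all_solvable all_character.
Set Implicit Arguments. Unset Strict Implicit. Unset Printing Implicit Defensive.
Import GRing.Theory.
Local Open Scope group_scope.

Section Defs.
Variable gT : finGroupType.

Definition gen_pred (H : {set gT}) : pred nat :=
  fun n => [exists X : {set gT}, (#|X| == n) && (<<X>> == H)].

Lemma gen_pred_ex (H : {group gT}) : exists n, gen_pred H n.
Proof. by exists #|H|; apply/existsP; exists (H : {set gT}); rewrite eqxx genGid eqxx. Qed.

Definition d (H : {group gT}) : nat := ex_minn (gen_pred_ex H).

(* k-flexibility (k is restricted to 1 <= k <= d(G) where it is used). *)
Definition flexible (G : {group gT}) (k : nat) : Prop :=
  forall x : 'I_k -> gT, (forall i, x i \in G) ->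
    d <<[set x i | i : 'I_k]>>%G = k ->
    exists y : 'I_(d G - k) -> gT, (forall j, y j \in G) /\
      <<[set x i | i : 'I_k] :|: [set y j | j : 'I_(d G - k)]>> = G.

Definition Cyc (G : {set gT}) : {set gT} :=
  [set c in G | [forall h in G, cyclic <<[set c; h]>>]].
End Defs.

(* p^r : <g> for g in GL_r(p), r = r'.+1, with <g> acting naturally on F_p^r. *)
Definition cyc_GLrepr (p r' : nat) (g : {'GL_r'.+1['F_p]}) :=
  subg_repr (GLrepr 'F_p r') (subsetT <[g]>).
Definition psd (p r' : nat) (g : {'GL_r'.+1['F_p]}) : finGroupType :=
  sdprod_by ('MR (cyc_GLrepr g))%gact.

(* Write P = G / Cyc(G) = V ><| C, with V = F_p^r and C cyclic acting on V by
   scalars.  Any element together with elements of Cyc(G) generates a cyclic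
   group, so elements of Cyc(G) can be absorbed into a single generator; hence,
   for H <= G, a generating set of the image of H in P lifts to a generating set
   of H of size at most max(1, -).  In P, a generating set has at least
   log_p |V| + [C != 1] elements: after conjugating one generator into C, the
   V-parts of the others generate V.  Conversely every subgroup H of P is
   generated by H :&: V and one element h; if h = z ^ u is a V-conjugate of a
   nontrivial scalar, the commutators [c ^ (v u), z ^ u] generate <[v]>, so H
   extends to a generating set of P by max(1, d(P) - d(H)) elements.  Since
   k >= 2, the image of x_1, ..., x_k still needs k generators, and lifting the
   added elements to G yields x_(k+1), ..., x_(d G). *)

From HB Require Import structures.
From mathcomp Require Import all_boot all_order all_algebra all_fingroup all_solvable all_character.
Set Implicit Arguments. Unset Strict Implicit. Unset Printing Implicit Defensive.
Import GRing.Theory.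
Local Open Scope group_scope.

Lemma d_grank (gT : finGroupType) (H : {group gT}) : d H = 'm(H).
Proof.
rewrite /d; case: ex_minnP => n /existsP[X /andP[/eqP <- /eqP eX]] min_n.
apply/eqP; rewrite eqn_leq andbC -{1}eX grank_min /=.
have [B eB <-] := grank_witness H.
by apply: min_n; apply/existsP; exists B; rewrite eB !eqxx.
Qed.

Lemma gen_tuple_of_set (gT : finGroupType) (H : {group gT}) (X A : {set gT}) n :
  A \subset H -> #|A| <= n ->
  exists y : 'I_n -> gT,
    (forall j, y j \in H) /\ <<X :|: [set y j | j : 'I_n]>> = <<X :|: A>>.
Proof.
move=> sAH cardA; pose y (j : 'I_n) := nth 1 (enum A) j.
have sAY : A \subset [set y j | j : 'I_n].
  apply/subsetP=> a aA; have ia : index a (enum A) < n.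
    by apply: leq_trans cardA; rewrite cardE index_mem mem_enum.
  by apply/imsetP; exists (Ordinal ia); rewrite //= /y nth_index ?mem_enum.
have yA j : y j \in 1 |: A.
  rewrite in_setU1 -mem_enum; case: (ltnP j (size (enum A))) => [lt_j | le_j].
    by rewrite mem_nth ?orbT.
  by rewrite /y nth_default ?eqxx.
exists y; split=> [j | ].
  by case/setU1P: (yA j) => [-> | /(subsetP sAH)].
apply/eqP; rewrite eqEsubset [_ && _]andbC genS ?setUS //= gen_subG subUset sub_gen ?subsetUl //=.
apply/subsetP=> _ /imsetP[j _ ->]; case/setU1P: (yA j) => [-> | yjA]; first exact: group1.
by rewrite mem_gen // inE yjA orbT.
Qed.

Section MorphimGen.
Variables (aT rT : finGroupType) (D : {group aT}) (f : {morphism D >-> rT}).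

Lemma morphim_preim_set (H : {group aT}) (T : {set rT}) :
  H \subset D -> T \subset f @* H ->
  exists S : {set aT}, [/\ S \subset H, #|S| <= #|T| & f @* S = T].
Proof.
move=> sHD sTfH; pose lift y := odflt 1 [pick z in H | f z == y].
have liftP y : y \in T -> lift y \in H /\ f (lift y) = y.
  move/(subsetP sTfH); case/morphimP=> z _ zH ->; rewrite /lift.
  case: pickP => [z' /andP[z'H /eqP] | /(_ z)] //=; last by rewrite zH eqxx.
exists (lift @: T); split.
- by apply/subsetP=> _ /imsetP[y /liftP[? _] ->].
- exact: leq_imset_card.
rewrite morphimEsub; last first.
  by apply/subsetP=> _ /imsetP[y /liftP[yH _] ->]; apply: (subsetP sHD).
by rewrite -imset_comp (eq_in_imset (g := id)) ?imset_id // => y /liftP[].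
Qed.

Lemma gen_ker_of_morphim (H : {group aT}) (A : {set aT}) :
  H \subset D -> A \subset H -> f @* <<A>> = f @* H -> <<A :|: 'ker_H f>> = H.
Proof.
move=> sHD sAH fAH; have sgAH : <<A>> \subset H by rewrite gen_subG.
apply/eqP; rewrite eqEsubset gen_subG subUset sAH subsetIl /=.
have: H \subset f @*^-1 (f @* <<A>>) by rewrite fAH -sub_morphim_pre.
rewrite morphimK ?(subset_trans sgAH) // => sH.
have: H \subset H :&: 'ker f * <<A>> by rewrite subsetI subxx.
rewrite -group_modr // => /subset_trans-> //.
by rewrite mul_subG // ?genS ?subsetUl ?sub_gen ?subsetUr.
Qed.

End MorphimGen.

Lemma cyclic_quotient_gen1 (gT : finGroupType) (H V : {group gT}) :
  H \subset 'N(V) -> cyclic (H / V) ->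
  exists2 h, h \in H & <<h |: (H :&: V)>> = H.
Proof.
move=> nVH /cyclicP[hV eH]; have /morphimP[h hN hH ehV] : hV \in H / V.
  by rewrite eH cycle_id.
exists h => //; have -> : H :&: V = 'ker_H (coset V) by rewrite ker_coset.
apply: gen_ker_of_morphim; rewrite ?sub1set //.
by rewrite -[<<_>>]/<[h]> morphim_cycle // -ehV; apply: esym eH.
Qed.

Lemma grank_abelem (gT : finGroupType) p (U : {group gT}) :
  p.-abelem U -> 'm(U) = logn p #|U|.
Proof. by move=> abU; rewrite grank_abelian ?(abelem_abelian abU) ?(rank_abelem abU). Qed.

Lemma grank_gen_setU1 (gT : finGroupType) (K : {group gT}) x :
  'm(<<x |: K>>) <= 'm(K) + 1.
Proof.
have [B genB <-] := grank_witness K.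
rewrite -genB -[<<x |: <<B>>>>]/([set x] <*> <<B>>) joing_idr addn1.
by rewrite (leq_trans (grank_min _)) // cardsU1 -add1n leq_add2r leq_b1.
Qed.

Lemma abelem_gen_extend (gT : finGroupType) p (U W : {group gT}) :
  p.-abelem U -> W \subset U ->
  exists S : {set gT}, [/\ S \subset U, logn p #|W| + #|S| <= logn p #|U| &
    <<W :|: S>> = U].
Proof.
move=> abU sWU; have nWU := sub_abelian_norm (abelem_abelian abU) sWU.
have [B eB cardB] := grank_witness (U / W).
have sBU : B \subset U / W by rewrite -eB subset_gen.
have [S [sSU cardS eS]] := morphim_preim_set nWU sBU.
exists S; split=> //.
  rewrite -(Lagrange sWU) lognM ?cardG_gt0 ?indexg_gt0 // leq_add2l.
  rewrite -card_quotient // -(grank_abelem (quotient_abelem W abU)) -cardB.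
  exact: cardS.
have -> : (W : {set gT}) = 'ker_U (coset W) by rewrite ker_coset; apply/esym/setIidPr.
rewrite setUC; apply: gen_ker_of_morphim => //.
by rewrite morphim_gen ?(subset_trans sSU) // eS eB.
Qed.

Section SdprodPowerAction.
Variables (rT : finGroupType) (p : nat) (P V C : {group rT}) (c : rT).
Hypotheses (abV : p.-abelem V) (sdP : V ><| C = P) (eC : C :=: <[c]>).
(* C acts on V by scalars; only these two consequences of that are used. *)
Hypothesis nUC : forall U : {group rT}, U \subset V -> C \subset 'N(U).
Hypothesis fpf : forall z v, z \in C -> z != 1 -> v \in V -> v ^ z = v -> v = 1.

Lemma sdprod_trivial_complement : C :=: 1 -> P :=: V.
Proof. by case/sdprodP: sdP => _ <- _ _ ->; rewrite mulg1. Qed.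

Lemma sdprod_subG (K : {group rT}) : V \subset K -> c \in K -> P \subset K.
Proof. by case/sdprodP: sdP => _ <- _ _ sVK cK; rewrite eC mul_subG ?cycle_subG. Qed.

Lemma mulg_conj_complement z v : z \in C -> z != 1 -> v \in V ->
  exists2 u, u \in V & v * z = z ^ u.
Proof.
move=> zC ntz vV; have [_ _ _ nVC _] := sdprod_context sdP.
have ziC : z^-1 \in C by rewrite groupV.
(* Fixed-point-freeness makes u |-> [~ u, z^-1] injective, hence onto V. *)
have inj_comm : {in V &, injective (commg^~ z^-1)}.
  move=> u1 u2 u1V u2V /=; rewrite !commgEl => eq_comm.
  apply/eqP; rewrite eq_mulgV1; apply/eqP/(fpf ziC); rewrite ?invg_eq1 ?groupM ?groupV //.
  have e1 : u1 ^ z^-1 = u1 * (u2^-1 * u2 ^ z^-1) by rewrite -eq_comm mulKVg.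
  by rewrite conjMg conjVg e1 mulgA mulgK.
have: v \in [set [~ u, z^-1] | u in V].
  suff ->: [set [~ u, z^-1] | u in V] = V by [].
  apply/eqP; rewrite eqEcard card_in_imset // leqnn andbT.
  apply/subsetP=> _ /imsetP[u uV ->].
  by rewrite commgEl groupM ?groupV ?memJ_norm ?(subsetP nVC).
case/imsetP=> u uV ->; exists u => //.
by rewrite commgEl !conjgE invgK !mulgA mulgKV.
Qed.

Lemma notin_V_conj_complement (x : rT) : x \in P -> x \notin V ->
  exists z u, [/\ z \in C, z != 1, u \in V & x = z ^ u].
Proof.
case/sdprodP: sdP => _ <- _ _ /mulsgP[v z vV zC ->].
have [-> | ntz] := eqVneq z 1; first by rewrite mulg1 vV.
by have [u uV ->] := mulg_conj_complement zC ntz vV; exists z, u.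
Qed.

Lemma mem_cycle_mul_complement x : x \in P -> exists2 u, u \in V & x \in <[u]> * C.
Proof.
case/sdprodP: sdP => _ <- _ _ /mulsgP[v z vV zC ->].
have [-> | ntz] := eqVneq z 1; first by exists v; rewrite ?mem_mulg ?cycle_id.
have [u uV ->] := mulg_conj_complement zC ntz vV; exists u => //.
have uzV : u ^ z^-1 \in <[u]>.
  by rewrite memJ_norm ?cycle_id // (subsetP (nUC _)) ?groupV // cycle_subG.
rewrite -[z ^ u](mulgKV z) mem_mulg // conjgE !mulgA.
have -> : u^-1 * z * u * z^-1 = u^-1 * u ^ z^-1 by rewrite conjgE invgK !mulgA.
by rewrite groupM ?groupV ?cycle_id.
Qed.

Lemma logV_le_gen_setU1 (X : {set rT}) z : z \in C -> <<z |: X>> = P ->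
  logn p #|V| <= #|X|.
Proof.
move=> zC genP; have [/normal_sub sVP _ _ _ tiVC] := sdprod_context sdP.
have sXP : X \subset P by rewrite -genP sub_gen ?subsetUr.
pose w x := odflt 1 [pick u in V | x \in <[u]> * C].
have wP x : x \in P -> w x \in V /\ x \in <[w x]> * C.
  rewrite /w => /mem_cycle_mul_complement[u uV xuC].
  by case: pickP => [u' /andP[] | /(_ u)] //=; rewrite uV xuC.
have sBV : <<w @: X>> \subset V.
  rewrite gen_subG; apply/subsetP=> _ /imsetP[x xX ->].
  by case: (wP x (subsetP sXP x xX)).
have sPBC : P \subset <<w @: X>> * C.
  rewrite -norm_joinEr ?nUC // -genP gen_subG subUset sub1set mem_gen ?inE ?zC ?orbT //=.
  apply/subsetP=> x xX; have [_ xwC] := wP x (subsetP sXP x xX).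
  apply: subsetP xwC; rewrite norm_joinEr ?nUC // mulSg // cycle_subG.
  by rewrite mem_gen ?imset_f.
have eBV : <<w @: X>> = V.
  apply/eqP; rewrite eqEsubset sBV -[V : {set _}](setIidPr (subset_trans sVP sPBC)).
  by rewrite -group_modl // setIC tiVC mulg1 /=.
by rewrite -(grank_abelem abV) -eBV (leq_trans (grank_min _)) ?leq_imset_card.
Qed.

Lemma grank_sdprod_ge : logn p #|V| + (C :!=: 1) <= 'm(P).
Proof.
have [X genX <-] := grank_witness P.
have sXP : X \subset P by rewrite -genX subset_gen.
have [C1 | ntC] /= := eqVneq (C : {set rT}) 1.
  by rewrite addn0 -(grank_abelem abV) -(sdprod_trivial_complement C1) -genX grank_min.
have [x0 x0X x0V] : exists2 x0, x0 \in X & x0 \notin V.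
  case: (boolP (X \subset V)) => [sXV | /subsetPn[x0]]; last by exists x0.
  case/eqP: ntC; apply/trivgP; have [_ sCP _ _ <-] := sdprod_context sdP.
  by rewrite subsetI subxx andbT (subset_trans sCP) // -genX gen_subG.
have [z [u [zC ntz uV ex0]]] := notin_V_conj_complement (subsetP sXP x0 x0X) x0V.
have zXu : z \in X :^ u^-1 by rewrite -[z](conjgK u) -ex0 memJ_conjg.
have genXu : <<z |: (X :^ u^-1 :\ z)>> = P.
  have [/normal_sub sVP _ _ _ _] := sdprod_context sdP.
  by rewrite setD1K // genJ genX conjGid // groupV (subsetP sVP).
rewrite addn1 (leq_ltn_trans (logV_le_gen_setU1 zC genXu)) //.
by rewrite -(cardJg X u^-1) (cardsD1 z (X :^ u^-1)) zXu.
Qed.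

Lemma cycle_comm_conj z1 z2 v : z1 \in C -> z1 != 1 -> z2 \in C -> z2 != 1 -> v \in V ->
  v \in <[ [~ z1 ^ v, z2] ]> /\ [~ z1 ^ v, z2] \in V.
Proof.
move=> z1C ntz1 z2C ntz2 vV; set e := (v^-1) ^ z1 * v.
have svV : <[v]> \subset V by rewrite cycle_subG.
have nvC := nUC svV.
have eV : e \in <[v]> by rewrite groupM ?cycle_id // memJ_norm ?groupV ?cycle_id ?(subsetP nvC).
have -> : [~ z1 ^ v, z2] = [~ e, z2].
  have cz12 : [~ z1, z2] = 1.
    apply/eqP/commgP; move: z1C z2C; rewrite eC => z1C z2C.
    exact: (centsP (cycle_abelian c)) z1 z1C z2 z2C.
  have -> : z1 ^ v = z1 * e by rewrite /e !conjgE !mulgA mulgV mul1g.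
  by rewrite commMgJ cz12 conj1g mul1g.
have tv : [~ e, z2] \in <[v]> by rewrite commgEl groupM ?groupV // memJ_norm ?(subsetP nvC).
split; last exact: subsetP svV _ tv.
have [-> | ntv] := eqVneq v 1; first exact: group1.
have ntt : [~ e, z2] != 1.
  apply/negP => /conjg_fixP/(fpf z2C ntz2 (subsetP svV _ eV)) /eqP.
  rewrite /e -[v in _ * v]invgK -eq_mulgV1 => /eqP /(fpf z1C ntz1 (groupVr vV)) /eqP.
  by rewrite invg_eq1 (negbTE ntv).
have -> : <[ [~ e, z2] ]> = <[v]>.
  apply/eqP; rewrite eqEcard cycle_subG tv /= -!orderE.
  by rewrite (abelem_order_p abV (subsetP svV _ tv) ntt) (abelem_order_p abV vV ntv).
exact: cycle_id.
Qed.

Lemma mem_gen_conj_pair z1 z2 u v : z1 \in C -> z1 != 1 -> z2 \in C -> z2 != 1 ->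
  u \in V -> v \in V -> v \in <<[set z2 ^ u; z1 ^ (v * u)]>>.
Proof.
move=> z1C ntz1 z2C ntz2 uV vV.
have [vt tV] := cycle_comm_conj z1C ntz1 z2C ntz2 vV.
have conj_u : [~ z1 ^ v, z2] = [~ z1 ^ (v * u), z2 ^ u].
  rewrite conjgM -conjRg; apply/esym/conjg_fixP/commgP.
  exact: (centsP (abelem_abelian abV)).
apply: subsetP vt; rewrite conj_u cycle_subG groupR // mem_gen // !inE eqxx ?orbT //.
Qed.

Lemma gen_extend_sub_V (H : {group rT}) : H \subset V ->
  exists Y : {set rT}, [/\ Y \subset P, 'm(H) + #|Y| <= logn p #|V| + (C :!=: 1) & <<H :|: Y>> = P].
Proof.
move=> sHV; have [/normal_sub sVP sCP _ _ _] := sdprod_context sdP.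
have [S [sSV cardS genHS]] := abelem_gen_extend abV sHV.
rewrite (grank_abelem (abelemS sHV abV)).
have [C1 | ntC] /= := eqVneq (C : {set rT}) 1.
  by exists S; rewrite addn0 (sdprod_trivial_complement C1) genHS (subset_trans sSV).
have cP : c \in P by rewrite (subsetP sCP) // eC cycle_id.
exists (c |: S); split.
- by rewrite subUset sub1set cP (subset_trans sSV).
- by rewrite cardsU1 addnCA addnC leq_add ?leq_b1.
apply/eqP; rewrite eqEsubset gen_subG !subUset sub1set cP.
rewrite (subset_trans sHV sVP) (subset_trans sSV sVP) /=.
apply: sdprod_subG; last by rewrite mem_gen // !inE eqxx orbT.
by rewrite -genHS genS // setUS // subsetUr.
Qed.

Lemma gen_setIV_elt (H : {group rT}) : H \subset P ->
  exists2 h, h \in H & <<h |: (H :&: V)>> = H.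
Proof.
move=> sHP; have [nVP _ _ _ _] := sdprod_context sdP.
apply: cyclic_quotient_gen1; first exact: subset_trans sHP (normal_norm nVP).
apply: cyclicS (quotientS V sHP) _.
by rewrite -(isog_cyclic (sdprod_isog sdP)) eC cycle_cyclic.
Qed.

Lemma gen_conj_complement_extend (H : {group rT}) (S : {set rT}) z u :
    H \subset P -> z \in C -> z != 1 -> u \in V -> z ^ u \in H ->
    S \subset V -> S != set0 -> <<(H :&: V) :|: S>> = V ->
  <<H :|: [set c ^ (v * u) | v in S]>> = P.
Proof.
move=> sHP zC ntz uV zuH sSV /set0Pn[v0 v0S] genHVS.
have cC : c \in C by rewrite eC cycle_id.
have ntc : c != 1 by apply: contraNneq ntz => c1; move: zC; rewrite eC c1 cycle1 inE.
set Y := [set c ^ (v * u) | v in S].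
have cvuY v : v \in S -> c ^ (v * u) \in <<H :|: Y>>.
  by move=> vS; rewrite mem_gen // inE; apply/orP; right; apply/imsetP; exists v.
have sSK : S \subset <<H :|: Y>>.
  apply/subsetP=> v vS; apply: subsetP (mem_gen_conj_pair cC ntc zC ntz uV (subsetP sSV v vS)).
  by rewrite gen_subG subUset !sub1set cvuY // mem_gen // inE zuH.
have sVK : V \subset <<H :|: Y>>.
  by rewrite -genHVS gen_subG subUset sSK (subset_trans (subsetIl _ _)) ?sub_gen ?subsetUl.
have sYP : Y \subset P.
  have [/normal_sub sVP sCP _ _ _] := sdprod_context sdP.
  apply/subsetP=> _ /imsetP[v vS ->]; apply: groupJ; first exact: (subsetP sCP).
  by rewrite (subsetP sVP) // groupM // (subsetP sSV).
apply/eqP; rewrite eqEsubset gen_subG subUset sHP sYP /=; apply: (sdprod_subG sVK).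
have v0uK : v0 * u \in <<H :|: Y>> by rewrite (subsetP sVK) // groupM // (subsetP sSV).
by rewrite -[c](conjgK (v0 * u)) groupJ ?groupV ?cvuY.
Qed.

Lemma gen_extend_not_sub_V (H : {group rT}) : H \subset P -> ~~ (H \subset V) ->
  exists Y : {set rT}, [/\ Y \subset P, #|Y| <= maxn 1 (logn p #|V| + (C :!=: 1) - 'm(H))
    & <<H :|: Y>> = P].
Proof.
move=> sHP nsHV; have [_ sCP _ _ _] := sdprod_context sdP.
have ntC : C :!=: 1.
  by apply: contra nsHV => /eqP C1; rewrite -(sdprod_trivial_complement C1).
have [h hH genH] := gen_setIV_elt sHP.
have grankH : 'm(H) <= logn p #|(H :&: V)%G| + 1.
  rewrite -{1}genH -(grank_abelem (abelemS (subsetIr H V) abV)).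
  exact: grank_gen_setU1.
have [S [sSV cardS genHVS]] := abelem_gen_extend abV (subsetIr H V).
rewrite ntC /=; have [S0 | ntS] := eqVneq S set0.
  have cP : c \in P by rewrite (subsetP sCP) // eC cycle_id.
  exists [set c]; split; rewrite ?sub1set ?cards1 ?leq_maxl //.
  apply/eqP; rewrite eqEsubset gen_subG subUset sHP sub1set cP /=.
  apply: sdprod_subG; last by rewrite mem_gen ?inE ?eqxx ?orbT.
  by rewrite -genHVS S0 setU0 genS // (subset_trans (subsetIl _ _)) ?subsetUl.
have hV : h \notin V.
  by apply: contra nsHV => hV; rewrite -genH gen_subG subUset sub1set hV subsetIr.
have [z [u [zC ntz uV ehz]]] := notin_V_conj_complement (subsetP sHP h hH) hV.
rewrite ehz in hH; have genY := gen_conj_complement_extend sHP zC ntz uV hH sSV ntS genHVS.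
exists [set c ^ (v * u) | v in S]; split=> //; first by rewrite -genY sub_gen ?subsetUr.
apply: leq_trans (leq_imset_card _ _) (leq_trans _ (leq_maxr _ _)).
rewrite (leq_trans _ (leq_sub2l _ grankH)) // subnDr leq_subRL //.
exact: leq_trans (leq_addr _ _) cardS.
Qed.

Lemma sdprod_gen_extend (H : {group rT}) : H \subset P ->
  exists Y : {set rT}, [/\ Y \subset P, #|Y| <= maxn 1 (logn p #|V| + (C :!=: 1) - 'm(H))
    & <<H :|: Y>> = P].
Proof.
move=> sHP; have [sHV | nsHV] := boolP (H \subset V); last exact: gen_extend_not_sub_V.
have [Y [sYP cardY genY]] := gen_extend_sub_V sHV; exists Y; split => //.
by rewrite (leq_trans _ (leq_maxr _ _)) // leq_subRL ?(leq_trans (leq_addr _ _) cardY).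
Qed.

End SdprodPowerAction.

Section Cycliciser.
Variables (gT : finGroupType) (G : {group gT}).

Lemma Cyc_sub : Cyc G \subset G.
Proof. by apply/subsetP=> c; rewrite inE => /andP[]. Qed.

Lemma cyclic_Cyc_pair c h : c \in Cyc G -> h \in G -> cyclic <<[set c; h]>>.
Proof. by rewrite inE => /andP[_ /forall_inP cycG] /cycG. Qed.

Lemma cyclic_gen_Cyc a (S : {set gT}) : a \in G -> S \subset Cyc G -> cyclic <<a |: S>>.
Proof.
move=> aG; rewrite -[S]set_enum; elim: (enum S) => [|x s IHs] /=.
  by rewrite set_nil setU0 cycle_cyclic.
rewrite set_cons subUset sub1set => /andP[xZ sZ]; have [u gen_u] := cyclicP (IHs sZ).
have uG : u \in G.
  rewrite -cycle_subG -gen_u gen_subG subUset sub1set aG.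
  exact: subset_trans sZ Cyc_sub.
rewrite setUCA -[<<x |: _>>]/([set x] <*> _) -joing_idr gen_u joing_idr.
exact: cyclic_Cyc_pair.
Qed.

Lemma Cyc_group_set : group_set (Cyc G).
Proof.
apply/group_setP; split.
  rewrite inE group1; apply/forall_inP=> h hG.
  by apply: cyclicS (cycle_cyclic h); rewrite gen_subG subUset !sub1set group1 cycle_id.
move=> c1 c2 c1Z c2Z; rewrite inE groupM ?(subsetP Cyc_sub) //=.
apply/forall_inP=> h hG.
have sZ : [set c1; c2] \subset Cyc G by rewrite subUset !sub1set c1Z c2Z.
apply: cyclicS (cyclic_gen_Cyc hG sZ).
by rewrite gen_subG subUset !sub1set groupM ?mem_gen ?inE ?eqxx ?orbT.
Qed.

Canonical Cyc_group := Group Cyc_group_set.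

Lemma Cyc_norm : G \subset 'N(Cyc G).
Proof.
apply/normsP=> x xG; apply/eqP; rewrite eqEcard cardJg leqnn andbT.
apply/subsetP=> _ /imsetP[c cZ ->]; have cG := subsetP Cyc_sub c cZ.
rewrite inE groupJ //=; apply/forall_inP=> h hG.
have -> : [set c ^ x; h] = [set c; h ^ x^-1] :^ x.
  by rewrite conjUg !conjg_set1 conjgKV.
by rewrite genJ cyclicJ cyclic_Cyc_pair // groupJ ?groupV.
Qed.

Lemma Cyc_absorb (X A B : {set gT}) : A \subset G -> B \subset Cyc G ->
  exists A' : {set gT}, [/\ A' \subset <<A :|: B>>, #|A'| <= maxn 1 #|A|
    & <<X :|: A'>> = <<X :|: A :|: B>>].
Proof.
move=> sAG sBZ.
have [a [aG aA1 cardAa]] :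
    exists a, [/\ a \in G, a \in 1 |: A & #|A :\ a|.+1 <= maxn 1 #|A|].
  have [A0 | [a aA]] := set_0Vmem A.
    by exists 1; rewrite A0 set0D cards0 group1 setU11.
  by exists a; rewrite (subsetP sAG) // !inE aA orbT (cardsD1 a A) aA leq_maxr.
(* a and B generate a cycle <[u]>, so u can stand in for a and all of B. *)
have [u gen_u] := cyclicP (cyclic_gen_Cyc aG sBZ).
have a_gen (D : {set gT}) : A \subset D -> a \in <<D>>.
  by move=> sAD; case/setU1P: aA1 => [-> | aA]; rewrite ?group1 ?mem_gen ?(subsetP sAD).
have sUAB : <[u]> \subset <<A :|: B>>.
  by rewrite -gen_u gen_subG subUset sub1set a_gen ?subsetUl ?sub_gen ?subsetUr.
have sABL : <<A :|: B>> \subset <<X :|: A :|: B>> by rewrite genS // -setUA subsetUr.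
have uL : u \in <<X :|: A :|: B>> by rewrite (subsetP sABL) // -cycle_subG.
exists (u |: A :\ a); split.
- by rewrite subUset sub1set -cycle_subG sUAB (subset_trans (subsetDl _ _)) ?sub_gen ?subsetUl.
- by rewrite (leq_trans _ cardAa) // cardsU1 -add1n leq_add2r leq_b1.
have sUL : <[u]> \subset <<X :|: (u |: A :\ a)>>.
  by rewrite cycle_subG mem_gen // !inE eqxx orbT.
apply/eqP; rewrite eqEsubset !gen_subG !subUset sub1set uL /=; apply/and3P; split.
- by rewrite !sub_gen // -setUA ?subsetUl // setUCA (subset_trans (subsetDl _ _)) ?subsetUl.
- rewrite (sub_gen (subsetUl _ _)) /=; apply/subsetP=> y yA; have [-> | ntya] := eqVneq y a.
    by apply: (subsetP sUL); rewrite -gen_u mem_gen ?setU11.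
  by apply: mem_gen; rewrite !inE ntya yA !orbT.
- by rewrite (subset_trans _ sUL) // -gen_u sub_gen ?subsetUr.
Qed.

End Cycliciser.

Section CycKernel.
Variables (gT rT : finGroupType) (G : {group gT}) (phi : {morphism G >-> rT}).
Hypothesis kerG : 'ker phi = Cyc G.

(* The bound is maxn 1 #|T| rather than #|T|: for T = set0 the elements of
   'ker_H phi may still need one generator. *)
Lemma lift_gen_Cyc (H : {group gT}) (X : {set gT}) (T : {set rT}) :
  H \subset G -> X \subset H -> T \subset phi @* H -> <<phi @* X :|: T>> = phi @* H ->
  exists A : {set gT}, [/\ A \subset H, #|A| <= maxn 1 #|T| & <<X :|: A>> = H].
Proof.
move=> sHG sXH sTH genT.
have [S [sSH cardS imS]] := morphim_preim_set sHG sTH.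
have sXSH : X :|: S \subset H by rewrite subUset sXH.
have genXSK : <<X :|: S :|: 'ker_H phi>> = H.
  apply: gen_ker_of_morphim => //.
  by rewrite morphim_gen ?(subset_trans sXSH) // morphimU imS.
have sKZ : 'ker_H phi \subset Cyc G by rewrite kerG subsetIr.
have [A [sA cardA genA]] := Cyc_absorb X (subset_trans sSH sHG) sKZ.
exists A; split.
- by apply: subset_trans sA _; rewrite gen_subG subUset sSH subsetIl.
- by rewrite (leq_trans cardA) // geq_max leq_maxl (leq_trans cardS) ?leq_maxr.
- by rewrite genA genXSK.
Qed.

Lemma grank_le_morphim_Cyc (H : {group gT}) : H \subset G -> 'm(H) <= maxn 1 'm(phi @* H).
Proof.
move=> sHG; have [T genT cardT] := grank_witness (phi @* H).
have sTH : T \subset phi @* H by rewrite -genT subset_gen.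
have [|A [_ cardA genA]] := lift_gen_Cyc sHG (sub0set H) sTH.
  by rewrite morphim0 set0U.
by rewrite -cardT -genA set0U (leq_trans (grank_min _)).
Qed.

End CycKernel.

Section FlexibleCycSdprod.
Variables (gT rT : finGroupType) (G : {group gT}) (phi : {morphism G >-> rT}).
Variables (p : nat) (P V C : {group rT}) (c : rT).
Hypotheses (abV : p.-abelem V) (sdP : V ><| C = P) (eC : C :=: <[c]>).
Hypothesis nUC : forall U : {group rT}, U \subset V -> C \subset 'N(U).
Hypothesis fpf : forall z v, z \in C -> z != 1 -> v \in V -> v ^ z = v -> v = 1.
Hypotheses (imG : phi @* G = P) (kerG : 'ker phi = Cyc G).

Lemma flexible_Cyc_sdprod k : 1 < k < d G -> flexible G k.
Proof.
case/andP=> k_gt1 lt_k_dG x xG; rewrite !d_grank => grank_Xs; rewrite d_grank in lt_k_dG.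
set Xs := [set x i | i : 'I_k].
have sXsG : Xs \subset G by apply/subsetP=> _ /imsetP[i _ ->].
have sXbP : phi @* <<Xs>> \subset P by rewrite -imG morphimS ?gen_subG.
have grankP : logn p #|V| + (C :!=: 1) <= 'm(G).
  by rewrite (leq_trans (grank_sdprod_ge abV sdP nUC fpf)) // -imG morphim_grank.
have k_le_Xb : k <= 'm(phi @* <<Xs>>).
  have := grank_le_morphim_Cyc kerG (H := <<Xs>>%G); rewrite gen_subG grank_Xs => /(_ sXsG).
  by rewrite leq_max leqNgt k_gt1.
have [Y [sYP cardY genY]] := sdprod_gen_extend abV sdP eC nUC fpf sXbP.
have sYG : Y \subset phi @* G by rewrite imG.
have genXsY : <<phi @* Xs :|: Y>> = phi @* G.
  by rewrite imG -genY /= morphim_gen //; apply/esym/joing_idl.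
have [A [sAG cardA genA]] := lift_gen_Cyc kerG (subxx G) sXsG sYG genXsY.
have cardA' : #|A| <= 'm(G) - k.
  rewrite (leq_trans cardA) // geq_max subn_gt0 lt_k_dG (leq_trans cardY) //.
  by rewrite geq_max subn_gt0 lt_k_dG leq_sub.
have [y [yG geny]] := gen_tuple_of_set Xs sAG cardA'.
by exists y; rewrite geny genA.
Qed.

End FlexibleCycSdprod.

Section ScalarAffineGroup.
Variables (p r' : nat) (g : {'GL_r'.+1['F_p]}).

Local Notation to := ('MR (cyc_GLrepr g))%gact.
Local Notation V := (sdpair1 to @* [set: 'rV['F_p]_r'.+1])%G.
Local Notation C := (sdpair2 to @* <[g]>)%G.

Lemma psd_sdprod : V ><| C = [set: psd g].
Proof. exact: sdprod_sdpair. Qed.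

Lemma psd_abelem : prime p -> p.-abelem V.
Proof. by move=> pr_p; apply: morphim_abelem; apply: mx_Fp_abelem. Qed.

Lemma psd_cycle : C :=: <[sdpair2 to g]>.
Proof. exact: morphim_cycle (cycle_id g). Qed.

Variable lam : 'F_p.
Hypothesis g_scalar : GLval g = lam%:M%R.

Lemma psd_act_scalar a x : a \in <[g]> ->
  exists mu : 'F_p, to x a = (mu *: x)%R /\ (mu = 1%R -> a = 1).
Proof.
case/cycleP=> i ->; have GLgi : GLval (g ^+ i) = (lam ^+ i)%:M%R.
  rewrite -[GLval _]/(cyc_GLrepr g (g ^+ i)) repr_mxX ?cycle_id //=.
  by rewrite g_scalar rmorphXn.
exists (lam ^+ i)%R; split; last by move=> lam_i1; apply: val_inj; rewrite /= GLgi lam_i1.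
rewrite /= mx_repr_actE ?mem_cycle //.
by rewrite -[cyc_GLrepr g _]/(GLval (g ^+ i)) GLgi mul_mx_scalar.
Qed.

Lemma psd_norm_subV (U : {group psd g}) : U \subset V -> C \subset 'N(U).
Proof.
move=> sUV; apply/subsetP=> _ /morphimP[a _ ag ->].
rewrite inE; apply/subsetP=> _ /imsetP[w wU ->].
have /morphimP[x _ _ ew] := subsetP sUV w wU.
rewrite ew -sdpair_act ?inE //; have [mu [-> _]] := psd_act_scalar x ag.
by rewrite -[mu]natr_Zp scaler_nat -FinRing.zmodXgE morphX ?inE // groupX // -ew.
Qed.

Lemma psd_fixpoint_free z v : z \in C -> z != 1 -> v \in V -> v ^ z = v -> v = 1.
Proof.
move=> /morphimP[a _ ag ->] nta /morphimP[x _ _ ->].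
rewrite -sdpair_act ?inE // => fix_x; have [mu [ex mu1]] := psd_act_scalar x ag.
have : (mu *: x = x)%R by apply: (injmP (injm_sdpair1 to)); rewrite ?inE // -ex.
have ntmu : mu != 1%R by apply: contraNneq nta => /mu1 ->; rewrite morph1.
move/eqP; rewrite -subr_eq0 -{2}[x]scale1r -scalerBl scaler_eq0 subr_eq0 (negbTE ntmu).
by move=> /eqP ->; apply: morph1.
Qed.

End ScalarAffineGroup.

Theorem corollary2p11 (gT : finGroupType) (G : {group gT})
    (p r' : nat) (g : {'GL_r'.+1['F_p]}) :
  prime p -> 3 <= d G -> is_scalar_mx (GLval g) ->
  (G / Cyc G) \isog [set: psd g] ->
  forall k, 2 <= k < d G -> flexible G k.
Proof.
move=> pr_p _ /is_scalar_mxP[lam g_scalar] /isogP[f injf imf] k k_bounds.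
have sGN : G \subset coset (Cyc G) @*^-1 (G / Cyc G) by rewrite -sub_morphim_pre ?Cyc_norm.
set phi := restrm sGN (f \o coset (Cyc G)).
have imG : phi @* G = [set: psd g] by rewrite morphim_restrm setIid morphim_comp imf.
have kerG : 'ker phi = Cyc G.
  by rewrite ker_restrm ker_comp ker_injm // -kerE ker_coset; apply/setIidPr/Cyc_sub.
exact (flexible_Cyc_sdprod (psd_abelem g pr_p) (psd_sdprod g) (psd_cycle g)
  (psd_norm_subV g_scalar) (psd_fixpoint_free g_scalar) imG kerG k_bounds).
Qed.
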